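(* For all $n\ge1$, $$\varphi_n=2(n-1)H_n+2P_n,\qquad \theta_n=(2n-1)P_n.$$
   Context: Let $s=\sqrt3/2$. Consider the standard triangular lattice in the plane whose vertices are the points $(a+b/2,\,bs)$ with $a,b\in\mathbb Z$ and whose edges are the unit segments joining lattice points in the directions $0^\circ,60^\circ,120^\circ$; it divides the plane into unit equilateral triangles called cells. A small tile is a single cell; a large tile is an equilateral triangle of side $2$ whose vertices are lattice points (so it is a union of $4$ cells; it may point up or down). For a region $R$ that is a finite union of cells, a tiling of $R$ is a finite set of small and large tiles, each contained in $R$, with pairwise disjoint interiors and union equal to $R$. For $n\ge1$, the region $H_n$ is the union of the trapezoid with vertices $(0,0),(n,0),(n-\tfrac12,s),(\tfrac12,s)$ and the trapezoid with vertices $(\tfrac12,s),(n-\tfrac12,s),(n,2s),(0,2s)$ ($4n-2$ cells; for $n=1$ two unit triangles meeting at a point), and $P_n$ is $H_n$ with the cell with vertices $(n-1,0),(n,0),(n-\tfrac12,s)$ removed. $H_n$ and $P_n$ also denote the numbers of tilings of these regions; thus $H_n=\frac{(1+\sqrt2)^n+(1-\sqrt2)^n}{2}$ and $P_n=\frac{(1+\sqrt2)^n-(1-\sqrt2)^n}{2\sqrt2}$. Define $\varphi_n$ (resp. $\theta_n$) as the sum, over all tilings of $H_n$ (resp. $P_n$), of the number of small tiles in the tiling. *)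

From HB Require Import structures.
From mathcomp Require Import all_boot all_order all_algebra.
Set Implicit Arguments. Unset Strict Implicit. Unset Printing Implicit Defensive.
Import Order.TTheory GRing.Theory Num.Theory.

(* Lattice coordinates: the lattice point (a,b) : int * int is the point
   (a + b/2, b*s) of the plane, s = sqrt 3 / 2.

   A cell is encoded as (up, a, b):
   - (true,  a, b) = upward cell with vertices (a,b), (a+1,b), (a,b+1);
   - (false, a, b) = downward cell with vertices (a,b+1), (a+1,b+1), (a+1,b). *)
Definition cell := (bool * int * int)%type.

(* A tile is (large, c).  (false, c) is the small tile consisting of cell c.
   (true, (true, a, b))  is the upward large tile with vertices
       (a,b), (a+2,b), (a,b+2);
   (true, (false, a, b)) is the downward large tile with vertices
       (a,b+2), (a+2,b+2), (a+2,b). *)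
Definition tile := (bool * cell)%type.

Local Open Scope ring_scope.

Definition tile_cells (t : tile) : seq cell :=
  match t with
  | (false, c) => [:: c]
  | (true, (true, a, b)) =>
      [:: (true, a, b); (true, a + 1, b); (true, a, b + 1); (false, a, b)]
  | (true, (false, a, b)) =>
      [:: (false, a + 1, b); (false, a, b + 1); (false, a + 1, b + 1);
          (true, a + 1, b + 1)]
  end.

Definition is_small (t : tile) : bool := ~~ t.1.

Definition H_cells (n : nat) : seq cell :=
  [seq (true, i%:Z, 0%:Z) | i <- iota 0 n] ++
  [seq (false, i%:Z, 0%:Z) | i <- iota 0 n.-1] ++
  [seq (true, i%:Z, 1%:Z) | i <- iota 0 n.-1] ++
  [seq (false, i%:Z - 1, 1%:Z) | i <- iota 0 n].

(* P_n : H_n minus the cell with vertices (n-1,0),(n,0),(n-1/2,s),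
   i.e. the up cell (n-1, 0). *)
Definition P_cells (n : nat) : seq cell :=
  [seq c <- H_cells n | c != (true, n%:Z - 1, 0%:Z)].

(* Finite index type for tiles, with a in [-2, n+1] and b in [-1, 2].
   Every tile contained in H_n (or P_n) has a in [-1, n-1] and b in [0, 1],
   so no tile of any tiling is missed. *)
Definition tbox (n : nat) := (bool * bool * 'I_(n + 4) * 'I_4)%type.

Definition tile_of (n : nat) (x : tbox n) : tile :=
  let: (l, u, i, j) := x in (l, (u, (nat_of_ord i)%:Z - 2, (nat_of_ord j)%:Z - 1)).

(* T is a tiling of the region R (given as a duplicate-free list of cells):
   the multiset union of the cells of the tiles of T is exactly R, i.e.
   every tile lies in R, the tiles cover R, and no cell is covered twice
   (equivalently: tiles have pairwise disjoint interiors). *)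
Definition is_tiling (n : nat) (R : seq cell) (T : {set tbox n}) : bool :=
  perm_eq (flatten [seq tile_cells (tile_of x) | x <- enum T]) R.

Definition num_small (n : nat) (T : {set tbox n}) : nat :=
  #|[set x in T | is_small (tile_of x)]|.

Definition Hnum (n : nat) : nat := #|[set T : {set tbox n} | is_tiling (H_cells n) T]|.
Definition Pnum (n : nat) : nat := #|[set T : {set tbox n} | is_tiling (P_cells n) T]|.

Definition phi (n : nat) : nat :=
  (\sum_(T : {set tbox n} | is_tiling (H_cells n) T) num_small T)%N.
Definition theta (n : nat) : nat :=
  (\sum_(T : {set tbox n} | is_tiling (P_cells n) T) num_small T)%N.

From mathcomp Require Import all_boot all_order all_algebra zify.
Set Implicit Arguments. Unset Strict Implicit. Unset Printing Implicit Defensive.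
Import GRing.Theory.

(* A tiling is determined by its large tiles, the small tiles filling the
   remaining cells.  A large tile inside H_n is attached to a column k < n-1 of
   the middle of the strip: it is either the upward tile with vertex (k,0) or the
   downward tile with vertex (k+1,0).  The two tiles of a column overlap, and so
   do two upward or two downward tiles of consecutive columns, while all other
   pairs are disjoint.  Hence the tilings of H_n correspond to the words of
   length n-1 over {0,1,2} (0: no large tile) without factor 11 or 22, and those
   of P_n to the words not ending in 1, since the removed cell lies only in the
   upward tile of the last column.  A tiling of a region of c cells with j large
   tiles has c - 4j small tiles, and an induction on the length m of the words,
   keeping track of the last letter, shows that twice the total number of
   nonzero letters is (m+1) H - P over all words and m P over the words not
   ending in 1. *)

Lemma uniq_flatten_mapP (A B : eqType) (g : A -> seq B) (s : seq A) :
  uniq s -> {in s, forall x, uniq (g x)} ->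
  uniq (flatten (map g s)) <->
  (forall x y c, x \in s -> y \in s -> c \in g x -> c \in g y -> x = y).
Proof.
elim: s => [|a s IH] /= Us Ug; first by split => // _ x y c.
case/andP: Us => nas Us.
have {}IH := IH Us (fun x xs => Ug x (@mem_behead _ (a :: s) x xs)).
rewrite cat_uniq Ug ?mem_head //=; split.
- case/andP => /hasPn disj Uf x y c.
  have apart z : z \in s -> c \in g a -> c \in g z -> False.
    move=> zs ca cz; suff : c \notin g a by rewrite ca.
    by apply: disj; apply/flattenP; exists (g z); first exact: map_f.
  rewrite !inE => /predU1P[->|xs] /predU1P[->|ys] cx cy //.
  + by case: (apart y ys cx cy).
  + by case: (apart x xs cy cx).
  + exact: (proj1 IH Uf x y c).
- move=> H; apply/andP; split.
  + apply/hasPn => c /flattenP [_ /mapP [z zs ->] cz]; apply/negP => ca.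
    by move: nas; rewrite (H a z c (mem_head _ _) (@mem_behead _ (a :: s) z zs) ca cz) zs.
  + by apply/IH => x y c xs ys; apply: H; rewrite inE ?xs ?ys orbT.
Qed.

Lemma tile_cells_uniq t : uniq (tile_cells t).
Proof.
case: t => [[]] [[[] a] b] //=; rewrite !inE !xpair_eqE /= ?andbT ?andbF ?orbF; lia.
Qed.

Lemma is_tilingP n (R : seq cell) (T : {set tbox n}) : uniq R ->
  reflect [/\ forall x, x \in T -> {subset tile_cells (tile_of x) <= R},
      forall c, c \in R -> exists2 x, x \in T & c \in tile_cells (tile_of x) &
      forall x y c, x \in T -> y \in T ->
        c \in tile_cells (tile_of x) -> c \in tile_cells (tile_of y) -> x = y]
    (is_tiling R T).
Proof.
move=> UR; rewrite /is_tiling; set F := flatten _.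
have memF c : reflect (exists2 x, x \in T & c \in tile_cells (tile_of x)) (c \in F).
  apply: (iffP flattenP) => [[_ /mapP [x xT ->]] cx|[x xT cx]].
    by exists x; rewrite // -mem_enum.
  by exists (tile_cells (tile_of x)) => //; apply: map_f; rewrite mem_enum.
have UF : uniq F <-> forall x y c, x \in T -> y \in T ->
    c \in tile_cells (tile_of x) -> c \in tile_cells (tile_of y) -> x = y.
  rewrite uniq_flatten_mapP ?enum_uniq //; last by move=> x _; apply: tile_cells_uniq.
  split=> H x y c; last by rewrite !mem_enum; apply: H.
  by move=> xT yT; apply: H; rewrite mem_enum.
apply: (iffP idP) => [pF|[H1 H2 H3]].
  split; last by apply/UF; rewrite (perm_uniq pF).
  + by move=> x xT c cx; rewrite -(perm_mem pF); apply/memF; exists x.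
  + by move=> c; rewrite -(perm_mem pF) => /memF.
apply: uniq_perm => //; first exact/UF.
by move=> c; apply/memF/idP => [[x /H1]|/H2]; apply.
Qed.

Local Open Scope ring_scope.

Definition in_box (n : nat) (t : tile) : bool :=
  let: (_, (_, a, b)) := t in [&& -2 <= a, a <= n%:Z + 1, -1 <= b & b <= 2].

Definition box_of (n : nat) (t : tile) : tbox n :=
  let: (l, (u, a, b)) := t in (l, u, cast_ord (esym (addn4 n)) (inord `|a + 2|), inord `|b + 1|).

Lemma box_ofK n t : in_box n t -> tile_of (box_of n t) = t.
Proof.
case: t => l [[u a] b] /and4P[? ? ? ?] /=.
by rewrite !inordK; [congr (_, (_, _, _))|..]; lia.
Qed.

Lemma tile_ofK n : cancel (@tile_of n) (box_of n).
Proof.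
case=> [[[l u] i] j]; have := ltn_ord i; have := ltn_ord j => /= ? ?.
by congr (_, _, _, _); apply: val_inj; rewrite /= inordK; lia.
Qed.

Lemma tile_of_inj n : injective (@tile_of n).
Proof. exact: can_inj (@tile_ofK n). Qed.

Section Filling.

Variables (n : nat) (R : seq cell).
Hypotheses (R_uniq : uniq R) (R_box : forall c, c \in R -> in_box n (false, c)).

Definition covered (L : seq tile) (c : cell) : bool := has (fun t => c \in tile_cells t) L.

Definition fill (L : seq tile) : {set tbox n} :=
  [set x | let t := tile_of x in if t.1 then t \in L else (t.2 \in R) && ~~ covered L t.2].

Definition large_in_box (L : seq tile) : Prop := forall t, t \in L -> t.1 /\ in_box n t.

Lemma fill_tiling L : large_in_box L ->
  (forall t, t \in L -> {subset tile_cells t <= R}) ->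
  (forall t1 t2 c, t1 \in L -> t2 \in L -> c \in tile_cells t1 -> c \in tile_cells t2 -> t1 = t2) ->
  is_tiling R (fill L).
Proof.
move=> L_box L_R L_disj; apply/is_tilingP => //; split.
- move=> x; rewrite inE; case: (tile_of x) => [[] c] /=; first exact: L_R.
  by case/andP=> cR _ c'; rewrite inE => /eqP->.
- move=> c cR; have [/hasP[t tL ct]|ncov] := boolP (covered L c).
    have [tl tbox] := L_box t tL.
    exists (box_of n t); last by rewrite box_ofK.
    by rewrite inE box_ofK //; case: t tl {tbox ct} tL => [[] ?].
  have cbox := R_box cR.
  exists (box_of n (false, c)); last by rewrite box_ofK // inE.
  by rewrite inE box_ofK //= cR.
- move=> x y c; rewrite !inE => xL yL cx cy; apply: tile_of_inj.
  move: xL yL cx cy; case: (tile_of x) => [[] cx]; case: (tile_of y) => [[] cy] /=.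
  + exact: L_disj.
  + move=> tL /andP[_ ncov] ct; rewrite inE => /eqP ec; subst c.
    by case/negP: ncov; apply/hasP; exists (true, cx).
  + move=> /andP[_ ncov] tL; rewrite inE => /eqP-> ct.
    by case/negP: ncov; apply/hasP; exists (true, cy).
  + by move=> _ _; rewrite !inE => /eqP-> /eqP->.
Qed.

Lemma tiling_fill (T : {set tbox n}) L : is_tiling R T -> large_in_box L ->
  (forall x, (tile_of x).1 -> (x \in T) = (tile_of x \in L)) -> T = fill L.
Proof.
move=> /(is_tilingP _ R_uniq) [T_R T_cov T_disj] L_box T_L.
apply/setP => x; rewrite inE; case E: (tile_of x) => [[] c] /=; first by rewrite T_L E.
have cx : c \in tile_cells (tile_of x) by rewrite E inE.
apply/idP/andP => [xT|[cR ncov]].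
  split; first exact: T_R cx.
  apply/hasPn => t tL; apply/negP => ct; have [tl tbox] := L_box t tL.
  have tT : box_of n t \in T by rewrite T_L box_ofK.
  have ex : x = box_of n t by apply: T_disj xT tT cx _; rewrite box_ofK.
  by move: E tl; rewrite ex box_ofK // => ->.
have [y yT cy] := T_cov c cR; case Ey: (tile_of y) cy => [[] cy] cyy.
  by case/hasP: ncov; exists (tile_of y); rewrite -?T_L ?Ey.
move: cyy; rewrite inE => /eqP ec; subst cy.
by move: yT; rewrite -(tile_ofK x) -(tile_ofK y) E Ey.
Qed.

Lemma card_large_fill L : uniq L -> large_in_box L ->
  #|[set x in fill L | ~~ is_small (tile_of x)]| = size L.
Proof.
move=> UL L_box.
have -> : [set x in fill L | ~~ is_small (tile_of x)] = [set x | tile_of x \in L].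
  apply/setP => x; rewrite !inE /is_small negbK.
  case: (tile_of x) => [[] c] /=; rewrite ?andbT ?andbF //.
  by apply/esym/negP => /L_box[].
have UmL : uniq (map (box_of n) L).
  rewrite map_inj_in_uniq // => t1 t2 /L_box[_ b1] /L_box[_ b2] /(congr1 (@tile_of n)).
  by rewrite !box_ofK.
rewrite -(size_map (box_of n)) -(card_uniqP UmL); apply: eq_card => x; rewrite inE.
apply/idP/mapP => [xL|[t tL ->]]; first by exists (tile_of x); rewrite ?tile_ofK.
by have [_ tb] := L_box t tL; rewrite box_ofK.
Qed.

End Filling.

Lemma num_small_tiling n R (T : {set tbox n}) : is_tiling R T ->
  (num_small T + 4 * #|[set x in T | ~~ is_small (tile_of x)]|)%N = size R.
Proof.
move=> pT; rewrite -(perm_size pT) size_flatten /shape -map_comp sumnE big_map big_enum /=.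
rewrite (bigID (fun x => is_small (tile_of x))) /= /num_small -!sum1_card big_distrr /=.
congr (_ + _)%N; apply: eq_big => x; rewrite ?inE //=.
- by case/andP=> _; case: (tile_of x) => [[] c].
- by case/andP=> _; case: (tile_of x) => [[] [[[] a] b]].
Qed.

Definition in_H (n : nat) (c : cell) : bool :=
  let: (u, a, b) := c in
  if u then ((b == 0) && (0 <= a <= n%:Z - 1)) || ((b == 1) && (0 <= a <= n%:Z - 2))
  else ((b == 0) && (0 <= a <= n%:Z - 2)) || ((b == 1) && (-1 <= a <= n%:Z - 2)).

Lemma mem_cell_row (u0 : bool) (b0 d : int) (k : nat) (c : cell) :
  (c \in [seq (u0, i%:Z + d, b0) | i <- iota 0 k]) =
  [&& c.1.1 == u0, c.2 == b0 & d <= c.1.2 < k%:Z + d].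
Proof.
case: c => [[u a] b] /=; apply/mapP/idP => [[i]|/and3P[/eqP-> /eqP-> ?]].
  by rewrite mem_iota => ? [-> -> ->]; rewrite !eqxx /=; lia.
by exists `|a - d|%N; [rewrite mem_iota|congr (_, _, _)]; lia.
Qed.

Lemma H_cellsE n : H_cells n =
  [seq (true, i%:Z + 0, 0%:Z) | i <- iota 0 n] ++
  [seq (false, i%:Z + 0, 0%:Z) | i <- iota 0 n.-1] ++
  [seq (true, i%:Z + 0, 1%:Z) | i <- iota 0 n.-1] ++
  [seq (false, i%:Z - 1, 1%:Z) | i <- iota 0 n].
Proof. by congr (_ ++ _ ++ _ ++ _); apply: eq_map => i; rewrite addr0. Qed.

Lemma mem_H_cells n c : (c \in H_cells n) = in_H n c.
Proof.
rewrite H_cellsE !mem_cat !mem_cell_row; case: c => [[[] a] b] /=;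
  apply/idP/idP; case: n => [|n] /=; lia.
Qed.

Lemma H_cells_uniq n : uniq (H_cells n).
Proof.
have row_inj (u : bool) (b d : int) : injective (fun i : nat => (u, i%:Z + d, b)).
  by move=> i j [] /eqP; lia.
rewrite H_cellsE !cat_uniq !map_inj_uniq ?iota_uniq //= andbT.
by apply/and3P; split; apply/hasPn => c; rewrite ?mem_cat !mem_cell_row;
  case: c => [[u a] b] /=; lia.
Qed.

Lemma size_H_cells n : size (H_cells n) = (n + n.-1 + n.-1 + n)%N.
Proof. by rewrite /H_cells !size_cat !size_map !size_iota; lia. Qed.

Lemma in_H_box n c : in_H n c -> in_box n (false, c).
Proof. by case: c => [[[] a] b] /=; lia. Qed.

Definition P_corner (n : nat) : cell := (true, n%:Z - 1, 0%:Z).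

Lemma P_cellsE n : P_cells n = rem (P_corner n) (H_cells n).
Proof. by rewrite rem_filter ?H_cells_uniq. Qed.

Lemma P_cells_uniq n : uniq (P_cells n).
Proof. by rewrite P_cellsE rem_uniq ?H_cells_uniq. Qed.

Lemma mem_P_cells n c : (c \in P_cells n) = (c != P_corner n) && (c \in H_cells n).
Proof. by rewrite P_cellsE mem_rem_uniq ?H_cells_uniq // inE. Qed.

Lemma size_P_cells n : (0 < n)%N -> size (P_cells n) = (size (H_cells n)).-1.
Proof. by move=> n0; rewrite P_cellsE size_rem // mem_H_cells /=; lia. Qed.

Definition up_tile (k : nat) : tile := (true, (true, k%:Z, 0)).
Definition down_tile (k : nat) : tile := (true, (false, k%:Z - 1, 0)).

(* Letter [1] (resp. [2]) at position [k] of a word stands for the large tile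
   [up_tile k] (resp. [down_tile k]); both cover the cells (false, k, 0) and
   (true, k, 1). *)
Definition letter_tile (k l : nat) : tile := if l == 1%N then up_tile k else down_tile k.

Lemma letter_tile_inj k1 k2 l1 l2 : (0 < l1 < 3)%N -> (0 < l2 < 3)%N ->
  letter_tile k1 l1 = letter_tile k2 l2 -> k1 = k2 /\ l1 = l2.
Proof.
by case: l1 l2 => [|[|[|]]] // [|[|[|]]] //= _ _ [] /eqP; lia.
Qed.

Lemma letter_tiles_meet k1 k2 l1 l2 c : (0 < l1 < 3)%N -> (0 < l2 < 3)%N ->
  c \in tile_cells (letter_tile k1 l1) -> c \in tile_cells (letter_tile k2 l2) ->
  k1 = k2 \/ l1 = l2 /\ (k2 = k1.+1 \/ k1 = k2.+1).
Proof.
case: c => [[u a] b]; case: l1 l2 => [|[|[|]]] // [|[|[|]]] //= _ _;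
  rewrite !inE !xpair_eqE /=; lia.
Qed.

Lemma letter_tiles_share_cell k1 k2 l1 l2 : (0 < l1 < 3)%N -> (0 < l2 < 3)%N ->
  k1 = k2 \/ l1 = l2 /\ k2 = k1.+1 ->
  exists c, c \in tile_cells (letter_tile k1 l1) /\ c \in tile_cells (letter_tile k2 l2).
Proof.
move=> l1_12 l2_12 [<-|[<- ->]].
- exists (false, k1%:Z, 0); move: l1_12 l2_12.
  by case: l1 => [|[|[|]]] // _; case: l2 => [|[|[|]]] //= _; rewrite !inE !xpair_eqE /=; lia.
- move: l1_12 {l2_12}; case: l1 => [|[|[|]]] // _.
  + by exists (true, k1%:Z + 1, 0); rewrite /= !inE !xpair_eqE /=; lia.
  + by exists (false, k1%:Z, 1); rewrite /= !inE !xpair_eqE /=; lia.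
Qed.

Lemma letter_tile_box n k l : (k < n.-1)%N -> in_box n (letter_tile k l).
Proof. by rewrite /letter_tile; case: ifP => _ /=; lia. Qed.

Lemma letter_tile_sub_H n k l : (k < n.-1)%N ->
  {subset tile_cells (letter_tile k l) <= H_cells n}.
Proof.
move=> kn c; rewrite mem_H_cells /letter_tile; case: ifP => _;
  case: c => [[[] a] b]; rewrite /= !inE !xpair_eqE /=; lia.
Qed.

Lemma large_tile_sub_H n (t : tile) : t.1 -> {subset tile_cells t <= H_cells n} ->
  exists k l, [/\ (k < n.-1)%N, (0 < l < 3)%N & t = letter_tile k l].
Proof.
case: t => [[]] // [[u a] b] _ tH.
have cH c : c \in tile_cells (true, (u, a, b)) -> in_H n c by rewrite -mem_H_cells => /tH.
case: u {tH} cH => cH.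
- have := cH (true, a, b); have := cH (true, a + 1, b).
  have := cH (true, a, b + 1); have := cH (false, a, b).
  rewrite /= !inE !eqxx ?orbT /= => h1 h2 h3 h4.
  by exists (absz a), 1%N; split=> //; [|rewrite /letter_tile /up_tile; congr (_, (_, _, _))]; lia.
- have := cH (false, a + 1, b); have := cH (false, a, b + 1).
  have := cH (false, a + 1, b + 1); have := cH (true, a + 1, b + 1).
  rewrite /= !inE !eqxx ?orbT /= => h1 h2 h3 h4.
  by exists (absz (a + 1)), 2%N; split=> //; [|rewrite /letter_tile /down_tile; congr (_, (_, _, _))]; lia.
Qed.

Local Close Scope ring_scope.

Definition compatible (x y : nat) : bool := (x != y) || (x == 0).

Definition valid_word (m : nat) (w : seq nat) : bool :=
  [&& size w == m, all (fun l => l < 3) w & sorted compatible w].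

Definition word_tiles (w : seq nat) : seq tile :=
  [seq letter_tile k (nth 0 w k) | k <- iota 0 (size w) & nth 0 w k != 0].

Definition word_cells (w : seq nat) : seq cell := flatten (map tile_cells (word_tiles w)).

Definition large_count (w : seq nat) : nat := count (fun l => l != 0) w.

Lemma word_tilesP w t : reflect
  (exists2 k, k < size w & nth 0 w k != 0 /\ t = letter_tile k (nth 0 w k))
  (t \in word_tiles w).
Proof.
apply: (iffP mapP) => [[k]|[k kw [wk ->]]]; last by exists k; rewrite // mem_filter mem_iota wk.
by rewrite mem_filter mem_iota => /and3P[wk _ kw] ->; exists k.
Qed.

Lemma nth_letter w k : all (fun l => l < 3) w -> k < size w -> nth 0 w k < 3.
Proof. by move=> /allP w3 kw; apply/w3/mem_nth. Qed.

Lemma nonzero_letter w k : all (fun l => l < 3) w -> k < size w -> nth 0 w k != 0 ->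
  0 < nth 0 w k < 3.
Proof. by move=> w3 kw nz; rewrite lt0n nz (nth_letter w3 kw). Qed.

Lemma letter_tile_in_word w k l : all (fun l => l < 3) w -> k < size w ->
  0 < l < 3 -> (letter_tile k l \in word_tiles w) = (nth 0 w k == l).
Proof.
move=> w3 kw l12; apply/word_tilesP/eqP => [[k' k'w [wk' E]]|wk].
  have l' := nonzero_letter w3 k'w wk'.
  by case: (letter_tile_inj l12 l' E) => <- <-.
by exists k; rewrite // wk; split=> //; case/andP: l12; case: (l).
Qed.

Lemma word_tiles_uniq w : all (fun l => l < 3) w -> uniq (word_tiles w).
Proof.
move=> w3; rewrite map_inj_in_uniq ?filter_uniq ?iota_uniq // => k1 k2.
rewrite !mem_filter !mem_iota => /and3P[w1 _ k1w] /and3P[w2 _ k2w] E.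
have l1 := nonzero_letter w3 k1w w1.
have l2 := nonzero_letter w3 k2w w2.
by case: (letter_tile_inj l1 l2 E).
Qed.

Lemma size_word_tiles w : size (word_tiles w) = large_count w.
Proof.
by rewrite size_map size_filter /large_count -[in RHS](mkseq_nth 0 w) /mkseq count_map.
Qed.

Lemma word_tiles_disjoint m w t1 t2 c : valid_word m w ->
  t1 \in word_tiles w -> t2 \in word_tiles w ->
  c \in tile_cells t1 -> c \in tile_cells t2 -> t1 = t2.
Proof.
case/and3P=> _ w3 /(sortedP 0) wcomp.
move=> /word_tilesP[k1 k1w [w1 ->]] /word_tilesP[k2 k2w [w2 ->]] c1 c2.
have l1 := nonzero_letter w3 k1w w1.
have l2 := nonzero_letter w3 k2w w2.
have [->//|[el [ek|ek]]] := letter_tiles_meet l1 l2 c1 c2.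
- by move: (wcomp k1); rewrite -ek k2w => /(_ isT); rewrite /compatible el eqxx (negbTE w2).
- by move: (wcomp k2); rewrite -ek k1w => /(_ isT); rewrite /compatible el eqxx (negbTE w2).
Qed.

Lemma word_tiles_large_in_box n w : valid_word n.-1 w -> large_in_box n (word_tiles w).
Proof.
case/and3P=> /eqP sw _ _ t /word_tilesP[k kw [_ ->]].
by split; [rewrite /letter_tile; case: ifP|apply: letter_tile_box; rewrite -sw].
Qed.

Lemma word_cells_sub_H n w : valid_word n.-1 w -> {subset word_cells w <= H_cells n}.
Proof.
case/and3P=> /eqP sw _ _ c /flattenP[_ /mapP[t /word_tilesP[k kw [_ ->]] ->]].
by apply: letter_tile_sub_H; rewrite -sw.
Qed.

Lemma word_fill_tiling n R w : uniq R -> {subset R <= H_cells n} ->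
  valid_word n.-1 w -> {subset word_cells w <= R} -> is_tiling R (fill n R (word_tiles w)).
Proof.
move=> UR RH vw wR; apply: fill_tiling => //.
- by move=> c /RH; rewrite mem_H_cells => /in_H_box.
- exact: word_tiles_large_in_box.
- by move=> t tw c ct; apply: wR; apply/flattenP; exists (tile_cells t) => //; exact: map_f.
- by move=> t1 t2 c; apply: word_tiles_disjoint vw.
Qed.

Definition word_of (n : nat) (T : {set tbox n}) : seq nat :=
  mkseq (fun k => if box_of n (up_tile k) \in T then 1
                  else if box_of n (down_tile k) \in T then 2 else 0) n.-1.

Lemma word_of_fill n R w : valid_word n.-1 w -> word_of (fill n R (word_tiles w)) = w.
Proof.
case/and3P=> /eqP sw w3 _; apply: (@eq_from_nth _ 0); first by rewrite size_mkseq sw.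
move=> k; rewrite size_mkseq => kn; rewrite nth_mkseq //.
have kw : k < size w by rewrite sw.
have ub : in_box n (up_tile k) := letter_tile_box 1 kn.
have db : in_box n (down_tile k) := letter_tile_box 2 kn.
rewrite !inE !box_ofK //=.
rewrite (letter_tile_in_word (l := 1) w3 kw isT) (letter_tile_in_word (l := 2) w3 kw isT).
by have := nth_letter w3 kw; case: (nth 0 w k) => [|[|[|]]].
Qed.

Section TilingToWord.

Variables (n : nat) (R : seq cell) (T : {set tbox n}).
Hypotheses (R_uniq : uniq R) (R_H : {subset R <= H_cells n}) (T_tiling : is_tiling R T).

Lemma tiling_letter_tiles_eq k1 k2 l1 l2 : 0 < l1 < 3 -> 0 < l2 < 3 ->
  k1 < n.-1 -> k2 < n.-1 ->
  box_of n (letter_tile k1 l1) \in T -> box_of n (letter_tile k2 l2) \in T ->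
  k1 = k2 \/ l1 = l2 /\ k2 = k1.+1 -> k1 = k2 /\ l1 = l2.
Proof.
move=> l1_12 l2_12 k1n k2n t1T t2T near; apply: letter_tile_inj => //.
have [c [c1 c2]] := letter_tiles_share_cell l1_12 l2_12 near.
have /(is_tilingP _ R_uniq) [_ _ T_disj] := T_tiling.
have b1 := letter_tile_box l1 k1n; have b2 := letter_tile_box l2 k2n.
rewrite -(box_ofK b1) -(box_ofK b2) in c1 c2 *.
by rewrite (T_disj _ _ c t1T t2T c1 c2).
Qed.

Lemma word_of_letter k l : k < n.-1 -> 0 < l < 3 ->
  (nth 0 (word_of T) k == l) = (box_of n (letter_tile k l) \in T).
Proof.
move=> kn l12; rewrite nth_mkseq //.
have up_down : box_of n (up_tile k) \in T -> box_of n (down_tile k) \notin T.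
  move=> uT; apply/negP => dT.
  by case: (tiling_letter_tiles_eq (l1 := 1) (l2 := 2) isT isT kn kn uT dT (or_introl erefl)).
case/andP: l12; case: l => [|[|[|]]] //= _ _; first by case: ifP => //; case: ifP.
by case: ifP => [/up_down/negbTE ->|_] //; case: ifP.
Qed.

Lemma word_of_valid : valid_word n.-1 (word_of T).
Proof.
rewrite /valid_word size_mkseq eqxx /=; apply/andP; split.
  by apply/allP => l /mapP[k _ ->]; case: ifP => //; case: ifP.
apply/(sortedP 0) => k; rewrite size_mkseq => kn.
apply/contraT; rewrite negb_or negbK => /andP[/eqP same nz].
have kn' : k < n.-1 by rewrite ltnW.
set l := nth 0 (word_of T) k in same nz.
have l12 : 0 < l < 3 by rewrite lt0n nz /l nth_mkseq //; case: ifP => //; case: ifP.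
have t1T : box_of n (letter_tile k l) \in T by rewrite -word_of_letter.
have t2T : box_of n (letter_tile k.+1 l) \in T by rewrite -word_of_letter // -same.
by case: (tiling_letter_tiles_eq l12 l12 kn' kn t1T t2T (or_intror (conj erefl erefl))) => /n_Sn.
Qed.

Lemma word_of_tiles_in_tiling t : t \in word_tiles (word_of T) -> box_of n t \in T.
Proof.
have /and3P[/eqP sw _ _] := word_of_valid.
case/word_tilesP=> k kw [nz ->]; rewrite sw in kw.
rewrite -word_of_letter //; rewrite lt0n nz nth_mkseq //.
by case: ifP => //; case: ifP.
Qed.

Lemma word_of_cells_sub : {subset word_cells (word_of T) <= R}.
Proof.
have /(is_tilingP _ R_uniq) [T_R _ _] := T_tiling.
move=> c /flattenP[_ /mapP[t tw ->] ct]; apply: (T_R _ (word_of_tiles_in_tiling tw)).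
by have [_ tb] := word_tiles_large_in_box word_of_valid tw; rewrite box_ofK.
Qed.

Lemma tiling_word_fill : T = fill n R (word_tiles (word_of T)).
Proof.
have /(is_tilingP _ R_uniq) [T_R _ _] := T_tiling.
have /and3P[/eqP sw w3 _] := word_of_valid.
apply: tiling_fill => //; first exact: word_tiles_large_in_box word_of_valid.
move=> x xl; apply/idP/idP => [xT|/word_of_tiles_in_tiling]; last by rewrite tile_ofK.
have [k [l [kn l12 Ex]]] := large_tile_sub_H xl (fun c cx => R_H (T_R x xT c cx)).
by rewrite Ex letter_tile_in_word ?sw // word_of_letter // -Ex tile_ofK.
Qed.

End TilingToWord.

Lemma card_tilings_and_num_small n R L : uniq R -> {subset R <= H_cells n} -> uniq L ->
  (forall w, w \in L <-> valid_word n.-1 w /\ {subset word_cells w <= R}) ->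
  #|[set T : {set tbox n} | is_tiling R T]| = size L /\
  (\sum_(T : {set tbox n} | is_tiling R T) num_small T
     + 4 * \sum_(w <- L) large_count w = size R * size L).
Proof.
move=> UR RH UL memL; pose tiling_of w := fill n R (word_tiles w).
have tilingsE T : is_tiling R T = (T \in map tiling_of L).
  apply/idP/mapP => [tT|[w /memL[vw wR] ->]]; last exact: word_fill_tiling.
  exists (word_of T); last exact: (tiling_word_fill UR RH tT).
  by apply/memL; split; [exact: (word_of_valid UR tT)|exact: (word_of_cells_sub UR tT)].
have inj : {in L &, injective tiling_of}.
  move=> w1 w2 /memL[v1 _] /memL[v2 _] /(congr1 (@word_of n)).
  by rewrite !word_of_fill.
have UmL : uniq (map tiling_of L) by rewrite map_inj_in_uniq.
split.
  by rewrite -(size_map tiling_of) -(card_uniqP UmL); apply: eq_card => T; rewrite inE tilingsE.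
rewrite (eq_bigl (mem (map tiling_of L))) => [|T]; last by rewrite tilingsE.
rewrite -big_uniq // big_map big_distrr -big_split /= big_seq.
rewrite (eq_bigr (fun _ => size R)) => [|w /memL[vw wR]].
  by rewrite -big_seq big_const_seq count_predT iter_addn_0 mulnC.
have /and3P[_ w3 _] := vw.
rewrite -size_word_tiles -(card_large_fill R (word_tiles_uniq w3) (word_tiles_large_in_box vw)).
by apply: num_small_tiling; apply: word_fill_tiling.
Qed.

Lemma valid_word_rcons m w l :
  valid_word m.+1 (rcons w l) = [&& valid_word m w, l < 3 & compatible (last 0 w) l].
Proof.
rewrite /valid_word size_rcons eqSS all_rcons.
have -> : sorted compatible (rcons w l) = sorted compatible w && compatible (last 0 w) l.
  by case: w => [|x p] /=; rewrite ?rcons_path // /compatible orbT.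
by case: (size w == m); case: (l < 3); case: (all _ w); case: (sorted _ w).
Qed.

Lemma valid_word_last m w : valid_word m w -> last 0 w < 3.
Proof.
case/and3P=> _ /allP w3 _; case/lastP: w w3 => [|w l] w3 //.
by rewrite last_rcons; apply: w3; rewrite mem_rcons mem_head.
Qed.

(* The valid words of length [m], sorted by their last letter (0 for the
   empty word). *)
Fixpoint words_by_last (m : nat) : seq (seq nat) * seq (seq nat) * seq (seq nat) :=
  if m is m'.+1 then
    let: (e, u, d) := words_by_last m' in
    ([seq rcons w 0 | w <- e ++ u ++ d], [seq rcons w 1 | w <- e ++ d],
     [seq rcons w 2 | w <- e ++ u])
  else ([:: [::]], [::], [::]).

Lemma mem_map_rcons (s : seq (seq nat)) l0 w l :
  (rcons w l \in [seq rcons v l0 | v <- s]) = (l == l0) && (w \in s).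
Proof.
apply/mapP/andP => [[v vs /eqP]|[/eqP-> ws]]; last by exists w.
by rewrite eqseq_rcons => /andP[/eqP-> /eqP->].
Qed.

Lemma nil_notin_map_rcons (s : seq (seq nat)) l0 : ([::] \in [seq rcons v l0 | v <- s]) = false.
Proof. by apply/mapP => -[v _] /eqP; rewrite eq_sym -size_eq0 size_rcons. Qed.

Lemma mem_words_by_last m w :
  [/\ (w \in (words_by_last m).1.1) = valid_word m w && (last 0 w == 0),
      (w \in (words_by_last m).1.2) = valid_word m w && (last 0 w == 1) &
      (w \in (words_by_last m).2) = valid_word m w && (last 0 w == 2)].
Proof.
elim: m w => [|m IH] w; first by rewrite /valid_word !inE; case: w.
rewrite /=; case: (words_by_last m) IH => [[e u] d] /= IH.
case/lastP: w => [|w l]; first by rewrite !nil_notin_map_rcons /valid_word.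
rewrite !mem_map_rcons !mem_cat valid_word_rcons last_rcons.
case: (IH w) => -> -> ->; case vw: (valid_word m w); last by rewrite /= !andbF.
by have := valid_word_last vw; case: (last 0 w) => [|[|[|]]] //; case: l => [|[|[|]]].
Qed.

Lemma words_by_last_uniq m : let: (e, u, d) := words_by_last m in uniq (e ++ u ++ d).
Proof.
elim: m => [|m] //=; case: (words_by_last m) => [[e u] d] U.
have Ued : uniq (e ++ d) by apply: subseq_uniq U; apply: cat_subseq (subseq_refl e) (suffix_subseq u d).
have Ueu : uniq (e ++ u) by apply: subseq_uniq U; apply: cat_subseq (subseq_refl e) (prefix_subseq u d).
rewrite !cat_uniq !map_inj_uniq ?Ued ?Ueu ?U; try exact: rcons_injl.
rewrite /= andbT; apply/andP; split.
- by apply/hasPn => z; rewrite mem_cat => /orP[] /mapP[v _ ->]; rewrite mem_map_rcons.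
- by apply/hasPn => z /mapP[v _ ->]; rewrite mem_map_rcons.
Qed.

Lemma sum_large_count_rcons (s : seq (seq nat)) l :
  \sum_(w <- [seq rcons v l | v <- s]) large_count w =
  \sum_(w <- s) large_count w + (l != 0) * size s.
Proof.
rewrite big_map; under eq_bigr do rewrite /large_count -cats1 count_cat /= addn0.
by rewrite big_split /= big_const_seq count_predT iter_addn_0 mulnC.
Qed.

(* The first two identities come from the symmetry exchanging the letters 1
   and 2; they are needed to carry the induction. *)
Lemma words_by_last_counts m : let: (e, u, d) := words_by_last m in
  let S s := \sum_(w <- s) large_count w in
  [/\ size u = size d, S u = S d,
      2 * (S e + S u + S d) + (size e + size d) = m.+1 * (size e + size u + size d) &
      2 * (S e + S d) = m * (size e + size d)].
Proof.
elim: m => [|m] /=; first by rewrite !big_nil !big_seq1.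
case: (words_by_last m) => [[e u] d] [h1 h2 h3 h4].
rewrite !sum_large_count_rcons !size_map !size_cat !big_cat /=.
by move: h3 h4; rewrite h1 h2; split; lia.
Qed.

Definition valid_words (m : nat) : seq (seq nat) :=
  let: (e, u, d) := words_by_last m in e ++ u ++ d.
Definition valid_words_not_last1 (m : nat) : seq (seq nat) :=
  let: (e, u, d) := words_by_last m in e ++ d.

Lemma mem_valid_words m w : (w \in valid_words m) = valid_word m w.
Proof.
rewrite /valid_words; have [] := mem_words_by_last m w.
case: (words_by_last m) => [[e u] d] /= E U D; rewrite !mem_cat E U D -!andb_orr.
by case vw: (valid_word m w) => //=; have := valid_word_last vw; case: (last 0 w) => [|[|[|]]].
Qed.

Lemma mem_valid_words_not_last1 m w :
  (w \in valid_words_not_last1 m) = valid_word m w && (last 0 w != 1).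
Proof.
rewrite /valid_words_not_last1; have [] := mem_words_by_last m w.
case: (words_by_last m) => [[e u] d] /= E _ D; rewrite !mem_cat E D -!andb_orr.
by case vw: (valid_word m w) => //=; have := valid_word_last vw; case: (last 0 w) => [|[|[|]]].
Qed.

Lemma valid_words_uniq m : uniq (valid_words m).
Proof. by have := words_by_last_uniq m; rewrite /valid_words; case: words_by_last => [[]]. Qed.

Lemma valid_words_not_last1_uniq m : uniq (valid_words_not_last1 m).
Proof.
have := words_by_last_uniq m; rewrite /valid_words_not_last1; case: words_by_last => [[e u] d].
by apply: subseq_uniq; apply: cat_subseq (subseq_refl e) (suffix_subseq u d).
Qed.

Lemma sum_large_valid_words m :
  2 * \sum_(w <- valid_words m) large_count w + size (valid_words_not_last1 m)
  = m.+1 * size (valid_words m).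
Proof.
have := words_by_last_counts m; rewrite /valid_words /valid_words_not_last1.
by case: words_by_last => [[e u] d] /= [_ _ h _]; rewrite !big_cat !size_cat /=; lia.
Qed.

Lemma sum_large_valid_words_not_last1 m :
  2 * \sum_(w <- valid_words_not_last1 m) large_count w = m * size (valid_words_not_last1 m).
Proof.
have := words_by_last_counts m; rewrite /valid_words_not_last1.
by case: words_by_last => [[e u] d] /= [_ _ _ h]; rewrite big_cat size_cat.
Qed.

Lemma mem_valid_words_H n w :
  w \in valid_words n.-1 <-> valid_word n.-1 w /\ {subset word_cells w <= H_cells n}.
Proof.
rewrite mem_valid_words; split=> [vw|[] //]; split=> //; exact: word_cells_sub_H.
Qed.

Lemma corner_in_letter_tile n k l : k < n.-1 -> 0 < l < 3 ->
  P_corner n \in tile_cells (letter_tile k l) -> l = 1 /\ k.+2 = n.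
Proof. by move=> kn; case: l => [|[|[|]]] //= _; rewrite /P_corner !inE !xpair_eqE /=; lia. Qed.

Lemma mem_valid_words_P n w : 0 < n ->
  w \in valid_words_not_last1 n.-1 <-> valid_word n.-1 w /\ {subset word_cells w <= P_cells n}.
Proof.
move=> n0; rewrite mem_valid_words_not_last1.
have corner_last : valid_word n.-1 w -> P_corner n \in word_cells w -> last 0 w = 1.
  case/and3P => /eqP sw w3 _ /flattenP[_ /mapP[t /word_tilesP[k kw [nz ->]] ->]].
  have l12 := nonzero_letter w3 kw nz.
  rewrite sw in kw; case/(corner_in_letter_tile kw l12) => wk1 kn.
  by rewrite -nth_last sw -kn.
split=> [/andP[vw l1]|[vw wP]].
  split=> // c cw; rewrite mem_P_cells (word_cells_sub_H vw cw) andbT.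
  by apply: contraNneq l1 => ec; rewrite (corner_last vw) -?ec.
rewrite vw /=; apply/negP => /eqP l1.
have /and3P[/eqP sw w3 _] := vw.
have wn : 0 < size w by case: (w) l1.
have kw : (size w).-1 < size w by rewrite prednK.
have up_in : up_tile (size w).-1 \in word_tiles w.
  by rewrite (letter_tile_in_word (l := 1) w3 kw) // nth_last l1.
have : P_corner n \in word_cells w.
  apply/flattenP; exists (tile_cells (up_tile (size w).-1)); first exact: map_f.
  by rewrite /P_corner /= !inE !xpair_eqE /=; lia.
by move/wP; rewrite mem_P_cells eqxx.
Qed.

Theorem theorem6 (n : nat) : (1 <= n)%N ->
  phi n = (2 * (n - 1) * Hnum n + 2 * Pnum n)%N /\
  theta n = ((2 * n - 1) * Pnum n)%N.
Proof.
move=> n_gt0.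
have [cardH sumH] := card_tilings_and_num_small (H_cells_uniq n) (fun c cH => cH) (valid_words_uniq _)
  (mem_valid_words_H n).
have P_sub_H : {subset P_cells n <= H_cells n} by move=> c; rewrite mem_P_cells => /andP[].
have [cardP sumP] := card_tilings_and_num_small (P_cells_uniq n) P_sub_H (valid_words_not_last1_uniq _)
  (fun w => mem_valid_words_P w n_gt0).
have := sum_large_valid_words n.-1; have := sum_large_valid_words_not_last1 n.-1.
rewrite /phi /theta /Hnum /Pnum cardH cardP.
move: sumH sumP; rewrite size_P_cells // size_H_cells -(prednK n_gt0) /=.
set m := n.-1; nia.
Qed.
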